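(* For every $k\ge3$, the distribution $P_{k\text{-NAE}}$ satisfies the conditions SYM, BAL, MIN, POS and UNI.
   Context: $\Omega=\{-1,1\}$, $q=2$. For $\tau\in\Omega^k$ let $\psi_\tau:\Omega^k\to\{0,1\}$, $\psi_\tau(\sigma)=1-\mathbf 1\{\sigma=\tau\}-\mathbf 1\{\sigma=-\tau\}$; $\Psi_{k\text{-NAE}}=\{\psi_\tau:\tau\in\Omega^k\}$ and $P_{k\text{-NAE}}$ is the uniform distribution on these $2^k$ functions. $\boldsymbol\psi$ denotes a sample from $P=P_{k\text{-NAE}}$ and $\xi=q^{-k}\sum_{\sigma\in\Omega^k}\mathbb E[\boldsymbol\psi(\sigma)]$; $\psi^\theta(\sigma)=\psi(\sigma_{\theta(1)},\dots,\sigma_{\theta(k)})$. SYM: for all $i\in[k]$, $\omega\in\Omega$, $\psi\in\Psi$, $\sum_{\tau\in\Omega^k}\mathbf 1\{\tau_i=\omega\}\psi(\tau)=q^{k-1}\xi$, and $P(\psi)=P(\psi^\theta)$ for every permutation $\theta$ of $[k]$. BAL: $\phi(\mu)=\sum_{\tau\in\Omega^k}\mathbb E[\boldsymbol\psi(\tau)]\prod_{i=1}^k\mu(\tau_i)$ is concave on the distributions $\mu$ on $\Omega$ and attains its maximum at the uniform distribution. MIN: among distributions $\rho$ on $\Omega\times\Omega$ with $\sum_s\rho(s,t)=\sum_s\rho(t,s)=1/q$ for all $t$, $\varphi(\rho)=\sum_{\sigma,\tau\in\Omega^k}\mathbb E[\boldsymbol\psi(\sigma)\boldsymbol\psi(\tau)]\prod_{i=1}^k\rho(\sigma_i,\tau_i)$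 has the uniform distribution as unique global minimiser. POS: for all probability measures $\pi,\pi'$ on the distributions on $\Omega$ with $\int\mu(\omega)d\pi(\mu)=\int\mu(\omega)d\pi'(\mu)=1/q$ for all $\omega$, and all $\ell\ge2$, with $\rho_i$ i.i.d. from $\pi$, $\rho'_i$ i.i.d. from $\pi'$, $\boldsymbol\psi$ from $P$, all independent, $\mathbb E[(1-\sum_\tau\boldsymbol\psi(\tau)\prod_{i=1}^k\rho_i(\tau_i))^\ell+(k-1)(1-\sum_\tau\boldsymbol\psi(\tau)\prod_{i=1}^k\rho'_i(\tau_i))^\ell-k(1-\sum_\tau\boldsymbol\psi(\tau)\rho_1(\tau_1)\prod_{i=2}^k\rho'_i(\tau_i))^\ell]\ge0$. UNI: every CSP with constraint functions from $\Psi$ (each constraint $a$ having a $k$-tuple $\partial a$ of variables) in which each constraint has pairwise distinct variables and whose bipartite variable–constraint graph is unicyclic admits $\sigma$ with $\prod_a\psi_a(\sigma(\partial a))>0$. *)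

From Stdlib Require Import Reals Lra Arith List.
Import ListNotations.
Open Scope R_scope.

(** Omega = {-1,1} is encoded by bool: true <-> 1, false <-> -1,
    so that negation (sigma |-> -sigma) is [negb].  Omega^k is the set of
    lists of length k; [cube k] enumerates it (without repetition). *)
Definition Omega := bool.

Fixpoint cube (k : nat) : list (list Omega) :=
  match k with
  | O => [nil]
  | S k' => map (cons true) (cube k') ++ map (cons false) (cube k')
  end.

Definition sumR {A : Type} (f : A -> R) (l : list A) : R :=
  fold_right (fun x acc => f x + acc) 0 l.
Definition prodR {A : Type} (f : A -> R) (l : list A) : R :=
  fold_right (fun x acc => f x * acc) 1 l.

Definition psi (tau sigma : list Omega) : R :=
  (1 - (if list_eq_dec Bool.bool_dec sigma tau then 1 else 0)
     - (if list_eq_dec Bool.bool_dec sigma (map negb tau) then 1 else 0))%R.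

(** Expectation over psi ~ P_{k-NAE} (uniform over the 2^k indices tau). *)
Definition Epsi (k : nat) (g : (list Omega -> R) -> R) : R :=
  / 2 ^ k * sumR (fun tau => g (psi tau)) (cube k).

Definition xi (k : nat) : R :=
  / 2 ^ k * sumR (fun sigma => Epsi k (fun ps => ps sigma)) (cube k).

Definition agree (k : nat) (f g : list Omega -> R) : bool :=
  forallb (fun s => if Req_EM_T (f s) (g s) then true else false) (cube k).

Definition Pmass (k : nat) (f : list Omega -> R) : R :=
  / 2 ^ k * sumR (fun tau => if agree k (psi tau) f then 1 else 0) (cube k).

(** Permutations of [k] = {0,...,k-1} (0-based indices). *)
Definition is_perm (k : nat) (theta : nat -> nat) : Prop :=
  (forall i, (i < k)%nat -> (theta i < k)%nat) /\
  (forall i j, (i < k)%nat -> (j < k)%nat -> theta i = theta j -> i = j).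

Definition permute (k : nat) (theta : nat -> nat) (f : list Omega -> R)
  : list Omega -> R :=
  fun sigma => f (map (fun i => nth (theta i) sigma true) (seq 0 k)).

Definition SYM (k : nat) : Prop :=
  (forall (i : nat) (w : Omega) (tau0 : list Omega),
      (i < k)%nat -> length tau0 = k ->
      sumR (fun tau => if Bool.eqb (nth i tau true) w then psi tau0 tau else 0)
           (cube k)
      = 2 ^ (k - 1) * xi k)
  /\
  (forall (theta : nat -> nat) (tau0 : list Omega),
      is_perm k theta -> length tau0 = k ->
      Pmass k (psi tau0) = Pmass k (permute k theta (psi tau0))).

Definition is_dist (mu : Omega -> R) : Prop :=
  (forall w, 0 <= mu w) /\ mu true + mu false = 1.

Definition phi (k : nat) (mu : Omega -> R) : R :=
  sumR (fun tau => Epsi k (fun ps => ps tau) * prodR mu tau) (cube k).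

Definition BAL (k : nat) : Prop :=
  (forall (mu1 mu2 : Omega -> R) (t : R),
      is_dist mu1 -> is_dist mu2 -> 0 <= t <= 1 ->
      t * phi k mu1 + (1 - t) * phi k mu2
        <= phi k (fun w => t * mu1 w + (1 - t) * mu2 w))
  /\
  (forall mu : Omega -> R, is_dist mu -> phi k mu <= phi k (fun _ => / 2)).

Definition is_coupling (rho : Omega -> Omega -> R) : Prop :=
  (forall s t, 0 <= rho s t) /\
  rho true true + rho true false + rho false true + rho false false = 1 /\
  (forall t, rho true t + rho false t = / 2) /\
  (forall t, rho t true + rho t false = / 2).

Definition varphi (k : nat) (rho : Omega -> Omega -> R) : R :=
  sumR (fun sigma =>
    sumR (fun tau =>
       Epsi k (fun ps => ps sigma * ps tau)
       * prodR (fun p => rho (fst p) (snd p)) (combine sigma tau))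
    (cube k)) (cube k).

Definition MIN (k : nat) : Prop :=
  forall rho : Omega -> Omega -> R,
    is_coupling rho ->
    (forall s t, rho s t = / 4) \/ varphi k (fun _ _ => / 4) < varphi k rho.

(** A distribution mu on Omega is determined by x = mu(1) in [0,1];
    [mu_of x] is the corresponding distribution.  A (Borel) probability
    measure pi on this simplex is represented by its integration functional
    on continuous functions (Riesz representation): a positive, normalised
    linear functional on C([0,1]), only depending on values on [0,1].
    (Its value on non-continuous arguments is irrelevant / unconstrained.) *)
Definition mu_of (x : R) : Omega -> R := fun w => if w then x else 1 - x.

Record PMeas : Type := {
  pint : (R -> R) -> R;
  pint_lin : forall (f g : R -> R) (a b : R), continuity f -> continuity g ->
      pint (fun x => a * f x + b * g x) = a * pint f + b * pint g;
  pint_pos : forall f : R -> R, continuity f ->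
      (forall x, 0 <= x <= 1 -> 0 <= f x) -> 0 <= pint f;
  pint_one : pint (fun _ => 1) = 1;
  pint_local : forall f g : R -> R,
      (forall x, 0 <= x <= 1 -> f x = g x) -> pint f = pint g
}.

(** Expectation of F(x_1,...,x_n) for independent x_i ~ Is_i
    (iterated integration = integration against the product measure). *)
Fixpoint iterI (Is : list ((R -> R) -> R)) (F : list R -> R) : R :=
  match Is with
  | nil => F nil
  | I0 :: rest => I0 (fun x => iterI rest (fun xs => F (x :: xs)))
  end.

Definition Wt (k : nat) (ps : list Omega -> R) (xs : list R) : R :=
  sumR (fun tau =>
     ps tau * prodR (fun p => mu_of (snd p) (fst p)) (combine tau xs)) (cube k).

(** Variables: ys = [x_1;...;x_k; x'_1;...;x'_k] with rho_i = mu_of x_i,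
    rho'_i = mu_of x'_i. *)
Definition POS_integrand (k l : nat) (ps : list Omega -> R) (ys : list R) : R :=
  let r := firstn k ys in
  let r' := skipn k ys in
  (1 - Wt k ps r) ^ l
  + (INR k - 1) * (1 - Wt k ps r') ^ l
  - INR k * (1 - Wt k ps (nth 0 r 0 :: skipn 1 r')) ^ l.

Definition POS (k : nat) : Prop :=
  forall (pi pi' : PMeas) (l : nat),
    (forall w, pint pi (fun x => mu_of x w) = / 2) ->
    (forall w, pint pi' (fun x => mu_of x w) = / 2) ->
    (2 <= l)%nat ->
    0 <= Epsi k (fun ps =>
           iterI (repeat (pint pi) k ++ repeat (pint pi') k)
                 (POS_integrand k l ps)).

Record constraint : Type := { ctau : list Omega; cvars : list nat }.

(** A CSP on variables 0..n-1 with constraints [cs]; constraint a has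
    function psi_{ctau a} in Psi_{k-NAE} and variable tuple cvars a. *)
Definition csp_wf (k n : nat) (cs : list constraint) : Prop :=
  forall c, In c cs ->
    length (ctau c) = k /\ length (cvars c) = k /\ NoDup (cvars c) /\
    (forall x, In x (cvars c) -> (x < n)%nat).

Inductive vertex : Type := VVar (i : nat) | VCon (a : nat).

Definition vvalid (n : nat) (cs : list constraint) (v : vertex) : Prop :=
  match v with
  | VVar i => (i < n)%nat
  | VCon a => (a < length cs)%nat
  end.

Definition adj (cs : list constraint) (v w : vertex) : Prop :=
  match v, w with
  | VVar i, VCon a | VCon a, VVar i =>
      exists c, nth_error cs a = Some c /\ In i (cvars c)
  | _, _ => False
  end.

Fixpoint walk (cs : list constraint) (u : vertex) (p : list vertex) (v : vertex)
  : Prop :=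
  match p with
  | nil => u = v
  | w :: p' => adj cs u w /\ walk cs w p' v
  end.

Definition connected (n : nat) (cs : list constraint) : Prop :=
  forall u v, vvalid n cs u -> vvalid n cs v -> exists p, walk cs u p v.

Definition is_cycle (cs : list constraint) (c : list vertex) : Prop :=
  (3 <= length c)%nat /\ NoDup c /\
  forall i, (i < length c)%nat ->
    adj cs (nth i c (VVar 0)) (nth (S i mod length c) c (VVar 0)).

Definition cycle_edge (c : list vertex) (u v : vertex) : Prop :=
  exists i, (i < length c)%nat /\
    ((nth i c (VVar 0) = u /\ nth (S i mod length c) c (VVar 0) = v) \/
     (nth i c (VVar 0) = v /\ nth (S i mod length c) c (VVar 0) = u)).

(** Unicyclic: connected, with exactly one cycle (cycles identified with
    their edge sets). *)
Definition unicyclic (n : nat) (cs : list constraint) : Prop :=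
  connected n cs /\
  exists c, is_cycle cs c /\
    forall c', is_cycle cs c' -> forall u v, cycle_edge c' u v <-> cycle_edge c u v.

Definition UNI (k : nat) : Prop :=
  forall (n : nat) (cs : list constraint),
    csp_wf k n cs -> unicyclic n cs ->
    exists sigma : nat -> Omega,
      0 < prodR (fun c => psi (ctau c) (map sigma (cvars c))) cs.

(* Since psi_tau = 1 - 1_tau - 1_(-tau), all averages against P_k-NAE are explicit:
   E[psi(sigma)] = 1 - 2^(1-k), so phi(mu) = (1 - 2^(1-k)) (mu(1) + mu(-1))^k, and
   varphi(rho) is a combination of the k-th powers of the total, diagonal and
   antidiagonal masses of rho; SYM, BAL and MIN follow (MIN by strict convexity of x^k).
   For POS, 1 - sum_tau psi(tau) prod_i rho_i(tau_i) = prod_i rho_i(t_i) + prod_i rho_i(-t_i);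
   expanding the l-th power binomially every term factorises over the coordinates, and
   after integration the POS expression is sum_j C(l,j) (A_j^k + (k-1) B_j^k - k A_j B_j^(k-1)),
   which is nonnegative by weighted AM-GM.
   For UNI, when k >= 3 every nonempty family S of constraints of a unicyclic CSP has a
   constraint with a variable occurring in no other constraint of S: otherwise both ends
   of a longest path in the subgraph spanned by S lie on cycles that cannot coincide.
   Removing such constraints one at a time and fixing their private variables last
   satisfies every NAE constraint. *)

From Stdlib Require Import Reals Arith List Lra Lia Classical.
Import ListNotations.
Open Scope R_scope.

Notation eqL := (list_eq_dec Bool.bool_dec).

(** * Finite sums and the cube *)

Lemma sumR_cons {A} (f : A -> R) x l : sumR f (x :: l) = f x + sumR f l.
Proof. reflexivity. Qed.

Lemma sumR_app {A} (f : A -> R) l1 l2 : sumR f (l1 ++ l2) = sumR f l1 + sumR f l2.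
Proof. induction l1 as [|x l1 IH]; simpl; [lra|]. unfold sumR in *; simpl; rewrite IH; lra. Qed.

Lemma sumR_map {A B} (g : A -> B) (f : B -> R) l :
  sumR f (map g l) = sumR (fun x => f (g x)) l.
Proof. induction l as [|x l IH]; simpl; auto. unfold sumR in *; simpl; rewrite IH; lra. Qed.

Lemma sumR_flat_map {A B} (f : B -> R) (g : A -> list B) l :
  sumR f (flat_map g l) = sumR (fun x => sumR f (g x)) l.
Proof. induction l as [|x l IH]; simpl; auto. rewrite sumR_app, IH. reflexivity. Qed.

Lemma sumR_ext_in {A} (f g : A -> R) l :
  (forall x, In x l -> f x = g x) -> sumR f l = sumR g l.
Proof.
  induction l as [|x l IH]; intros H; [reflexivity|].
  rewrite !sumR_cons, H by (left; auto). rewrite IH; auto. intros; apply H; right; auto.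
Qed.

Lemma sumR_ext {A} (f g : A -> R) l : (forall x, f x = g x) -> sumR f l = sumR g l.
Proof. intros; apply sumR_ext_in; auto. Qed.

Lemma sumR_plus {A} (f g : A -> R) l :
  sumR (fun x => f x + g x) l = sumR f l + sumR g l.
Proof. induction l; [simpl; lra|]. rewrite !sumR_cons, IHl; lra. Qed.

Lemma sumR_minus {A} (f g : A -> R) l :
  sumR (fun x => f x - g x) l = sumR f l - sumR g l.
Proof. induction l; [simpl; lra|]. rewrite !sumR_cons, IHl; lra. Qed.

Lemma sumR_scal {A} c (f : A -> R) l : sumR (fun x => c * f x) l = c * sumR f l.
Proof. induction l; [simpl; lra|]. rewrite !sumR_cons, IHl; lra. Qed.

Lemma sumR_zero {A} (l : list A) : sumR (fun _ => 0) l = 0.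
Proof. induction l; [reflexivity|]. rewrite sumR_cons, IHl; lra. Qed.

Lemma sumR_swap {A B} (F : A -> B -> R) l1 l2 :
  sumR (fun x => sumR (fun y => F x y) l2) l1 = sumR (fun y => sumR (fun x => F x y) l1) l2.
Proof.
  induction l1; simpl; [symmetry; apply sumR_zero|].
  rewrite IHl1, <- sumR_plus. reflexivity.
Qed.

Lemma sumR_nonneg {A} (f : A -> R) l : (forall x, In x l -> 0 <= f x) -> 0 <= sumR f l.
Proof.
  induction l as [|x l IH]; intros H; simpl; [lra|].
  pose proof (H x (or_introl eq_refl)). pose proof (IH (fun y Hy => H y (or_intror Hy))). lra.
Qed.

Lemma sumR_indicator {A} (dec : forall x y : A, {x = y} + {x <> y}) (a : A) l c :
  NoDup l -> In a l -> sumR (fun x => if dec x a then c else 0) l = c.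
Proof.
  induction l as [|b l IH]; intros Hnd Hin; [destruct Hin|].
  inversion Hnd; subst. rewrite sumR_cons.
  destruct (dec b a) as [->|ne].
  - rewrite (sumR_ext_in _ (fun _ => 0)), sumR_zero; [lra|].
    intros x Hx. destruct (dec x a); congruence.
  - destruct Hin as [->|Hin]; [congruence|]. rewrite IH; auto; lra.
Qed.

Lemma prodR_pos {A} (f : A -> R) l : (forall x, In x l -> 0 < f x) -> 0 < prodR f l.
Proof.
  induction l as [|x l IH]; intros H; simpl; [lra|].
  apply Rmult_lt_0_compat; [apply H; left; auto|apply IH; intros; apply H; right; auto].
Qed.

Lemma sumR_cube_S (f : list Omega -> R) k :
  sumR f (cube (S k)) = sumR (fun t : list Omega => f (true :: t)) (cube k)
  + sumR (fun t : list Omega => f (false :: t)) (cube k).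
Proof. simpl. rewrite sumR_app, !sumR_map. reflexivity. Qed.

Lemma in_cube_length k l : In l (cube k) -> length l = k.
Proof.
  revert l; induction k; simpl; intros l H.
  - destruct H as [<-|[]]; reflexivity.
  - apply in_app_or in H. destruct H as [H|H]; apply in_map_iff in H;
    destruct H as [t [<- Ht]]; simpl; rewrite IHk; auto.
Qed.

Lemma in_cube k l : length l = k -> In l (cube k).
Proof.
  revert l; induction k; intros [|b l] H; simpl in H |- *; try lia; auto.
  apply in_or_app. destruct b; [left|right]; apply in_map; apply IHk; lia.
Qed.

Lemma NoDup_cube k : NoDup (cube k).
Proof.
  induction k; simpl; [constructor; [intros []|constructor]|].
  apply NoDup_app; try (apply NoDup_map_NoDup_ForallPairs; auto; intros x y _ _ H; inversion H; auto).
  intros x H1 H2. apply in_map_iff in H1, H2.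
  destruct H1 as [? [<- _]]; destruct H2 as [? [E _]]; discriminate.
Qed.

Lemma sumR_cube_const k c : sumR (fun _ => c) (cube k) = c * 2 ^ k.
Proof. induction k; [simpl; lra|]. rewrite sumR_cube_S, IHk; simpl; lra. Qed.

Lemma sumR_cube_indicator k a c : length a = k ->
  sumR (fun x => if eqL x a then c else 0) (cube k) = c.
Proof. intros; apply sumR_indicator; [apply NoDup_cube|apply in_cube; auto]. Qed.

Lemma sumR_cube_prodR k (mu : Omega -> R) :
  sumR (prodR mu) (cube k) = (mu true + mu false) ^ k.
Proof.
  induction k; [simpl; lra|]. rewrite sumR_cube_S. simpl.
  rewrite !sumR_scal, IHk. ring.
Qed.

(** * The NAE constraint functions *)

Lemma map_negb_involutive (l : list bool) : map negb (map negb l) = l.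
Proof. induction l; simpl; auto. rewrite IHl, Bool.negb_involutive; auto. Qed.

Lemma nth_map_negb i l : (i < length l)%nat -> nth i (map negb l) true = negb (nth i l true).
Proof. revert i; induction l; simpl; intros [|i] H; auto; try lia. apply IHl; lia. Qed.

Lemma map_negb_neq (t : list bool) : t <> nil -> t <> map negb t.
Proof. destruct t as [|[] t]; simpl; congruence. Qed.

Lemma psi_comm t s : psi t s = psi s t.
Proof.
  unfold psi. pose proof (map_negb_involutive s). pose proof (map_negb_involutive t).
  destruct (eqL s t), (eqL t s), (eqL s (map negb t)), (eqL t (map negb s));
    subst; try lra; congruence.
Qed.

Lemma psi_negb t s : psi (map negb t) s = psi t s.
Proof.
  unfold psi. rewrite map_negb_involutive.
  destruct (eqL s (map negb t)), (eqL s t); lra.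
Qed.

Lemma psi_pos t s : s <> t -> s <> map negb t -> 0 < psi t s.
Proof. intros H1 H2. unfold psi. destruct (eqL s t), (eqL s (map negb t)); try congruence; lra. Qed.

Lemma sumR_psi_mul k t (f : list Omega -> R) : (1 <= k)%nat -> length t = k ->
  sumR (fun s => psi t s * f s) (cube k) = sumR f (cube k) - f t - f (map negb t).
Proof.
  intros Hk Ht.
  assert (Hneg : t <> map negb t) by (apply map_negb_neq; intros ->; simpl in Ht; lia).
  rewrite (sumR_ext _ (fun s => f s - (if eqL s t then f t else 0)
                                  - (if eqL s (map negb t) then f (map negb t) else 0))).
  - rewrite !sumR_minus, !sumR_cube_indicator; rewrite ?length_map; auto.
  - intros s. unfold psi. destruct (eqL s t), (eqL s (map negb t)); subst; try congruence; ring.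
Qed.

Lemma Epsi_psi k s : (1 <= k)%nat -> length s = k -> Epsi k (fun ps => ps s) = 1 - 2 / 2 ^ k.
Proof.
  intros Hk Hs. unfold Epsi.
  rewrite (sumR_ext _ (fun t => psi s t * 1)) by (intros; rewrite psi_comm; ring).
  rewrite sumR_psi_mul, sumR_cube_const by auto. field. apply pow_nonzero; lra.
Qed.

Lemma xi_eq k : (1 <= k)%nat -> xi k = 1 - 2 / 2 ^ k.
Proof.
  intros Hk. unfold xi.
  rewrite (sumR_ext_in _ (fun _ => 1 - 2 / 2 ^ k)), sumR_cube_const.
  - field. apply pow_nonzero; lra.
  - intros s Hs. apply Epsi_psi, in_cube_length; auto.
Qed.

(** * SYM *)

Definition coord_indicator (i : nat) (w : bool) (t : list bool) : R :=
  if Bool.eqb (nth i t true) w then 1 else 0.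

Lemma sumR_cube_coord_indicator k i w : (i < k)%nat ->
  sumR (fun t : list Omega => coord_indicator i w t) (cube k) = 2 ^ (k - 1).
Proof.
  unfold coord_indicator. revert i; induction k; intros i Hi; [lia|].
  rewrite sumR_cube_S. replace (S k - 1)%nat with k by lia. destruct i as [|i]; simpl.
  - rewrite !sumR_cube_const. destruct w; simpl; lra.
  - rewrite !IHk by lia. destruct k; [lia|]. replace (S k - 1)%nat with k by lia. simpl; lra.
Qed.

Lemma coord_indicator_negb i w t : (i < length t)%nat ->
  coord_indicator i w t + coord_indicator i w (map negb t) = 1.
Proof.
  intros Hi. unfold coord_indicator. rewrite (nth_map_negb i t Hi).
  destruct (nth i t true), w; simpl; lra.
Qed.

Lemma SYM_marginal k i w tau0 : (i < k)%nat -> length tau0 = k ->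
  sumR (fun tau => if Bool.eqb (nth i tau true) w then psi tau0 tau else 0) (cube k)
  = 2 ^ (k - 1) * xi k.
Proof.
  intros Hi Hl.
  rewrite (sumR_ext _ (fun tau => psi tau0 tau * coord_indicator i w tau))
    by (intros tau; unfold coord_indicator; destruct (Bool.eqb _ w); ring).
  rewrite sumR_psi_mul, sumR_cube_coord_indicator by first [exact Hl | lia].
  pose proof (coord_indicator_negb i w tau0 ltac:(unfold Omega in *; lia)).
  rewrite xi_eq by lia. destruct k as [|k]; [lia|]. replace (S k - 1)%nat with k by lia.
  simpl. field_simplify; [lra|apply pow_nonzero; lra].
Qed.

Lemma agree_spec k f g : agree k f g = true <-> (forall s, In s (cube k) -> f s = g s).
Proof.
  unfold agree. rewrite forallb_forall. split; intros H s Hs; specialize (H s Hs);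
    destruct (Req_EM_T (f s) (g s)); auto; discriminate.
Qed.

Lemma agree_ext_r k h f g :
  (forall s, In s (cube k) -> f s = g s) -> agree k h f = agree k h g.
Proof.
  intros H. apply Bool.eq_iff_eq_true. rewrite !agree_spec.
  split; intros E s Hs; rewrite E by auto; [|symmetry]; apply H; auto.
Qed.

Lemma psi_eq0_iff t s : length t = length s -> (1 <= length t)%nat ->
  psi t s = 0 <-> s = t \/ s = map negb t.
Proof.
  intros Hl H1. pose proof (map_negb_neq t ltac:(intros ->; simpl in H1; lia)).
  unfold psi. destruct (eqL s t), (eqL s (map negb t)); subst; split; intros;
    try congruence; try tauto; try lra; destruct H0; congruence.
Qed.

Lemma agree_psi_iff k tau t : (1 <= k)%nat -> length tau = k -> length t = k ->
  agree k (psi tau) (psi t) = true <-> tau = t \/ tau = map negb t.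
Proof.
  intros Hk H1 H2. rewrite agree_spec. split.
  - intros H. specialize (H t (in_cube k t H2)).
    assert (Htt : psi t t = 0) by (apply psi_eq0_iff; auto; lia).
    rewrite Htt in H. apply psi_eq0_iff in H; try lia.
    destruct H as [-> | ->]; [left|right]; rewrite ?map_negb_involutive; auto.
  - intros [E|E] s _; subst tau; auto. apply psi_negb.
Qed.

Lemma Pmass_psi k t : (1 <= k)%nat -> length t = k -> Pmass k (psi t) = 2 / 2 ^ k.
Proof.
  intros Hk Hl. unfold Pmass.
  pose proof (map_negb_neq t ltac:(intros ->; simpl in Hl; lia)).
  rewrite (sumR_ext_in _ (fun tau => (if eqL tau t then 1 else 0) + (if eqL tau (map negb t) then 1 else 0))).
  - rewrite sumR_plus, !sumR_cube_indicator; rewrite ?length_map; auto.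
    field. apply pow_nonzero; lra.
  - intros tau Htau. apply in_cube_length in Htau.
    pose proof (agree_psi_iff k tau t Hk Htau Hl) as Hiff.
    destruct (agree k (psi tau) (psi t)), (eqL tau t), (eqL tau (map negb t));
      subst; try congruence; try lra; exfalso; intuition congruence.
Qed.

Lemma is_perm_surj k theta : is_perm k theta ->
  forall j, (j < k)%nat -> exists i, (i < k)%nat /\ theta i = j.
Proof.
  intros [Hrange Hinj] j Hj.
  assert (Hnd : NoDup (map theta (seq 0 k))).
  { apply NoDup_map_NoDup_ForallPairs; [|apply seq_NoDup].
    intros x y Hx Hy E. apply in_seq in Hx, Hy. apply Hinj; auto; lia. }
  assert (Hincl : incl (seq 0 k) (map theta (seq 0 k))).
  { apply NoDup_length_incl; auto; [rewrite length_map; auto|].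
    intros x Hx. apply in_map_iff in Hx. destruct Hx as [i [<- Hi]].
    apply in_seq in Hi. apply in_seq. specialize (Hrange i). lia. }
  destruct (in_map_iff theta (seq 0 k) j) as [[i [E Hi]] _].
  { apply Hincl, in_seq; lia. }
  apply in_seq in Hi. exists i; split; auto; lia.
Qed.

Lemma is_perm_relabel k theta (tau0 : list Omega) : is_perm k theta -> length tau0 = k ->
  exists tau1 : list Omega, length tau1 = k /\
    forall i, (i < k)%nat -> nth (theta i) tau1 true = nth i tau0 true.
Proof.
  intros Hp Hl.
  assert (Hprefix : forall m, (m <= k)%nat -> exists l : list Omega, length l = m /\
     forall i, (i < k)%nat -> (theta i < m)%nat -> nth (theta i) l true = nth i tau0 true).
  { induction m as [|m IH]; intros Hm.
    - exists nil; split; auto. intros; lia.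
    - destruct IH as [l [Hlen Hl']]; [lia|].
      destruct (is_perm_surj k theta Hp m) as [i0 [Hi0 E0]]; [lia|].
      exists (l ++ [nth i0 tau0 true]). split; [rewrite length_app; simpl; lia|].
      intros i Hi Hlt. destruct (Nat.eq_dec (theta i) m) as [E|E].
      + rewrite app_nth2, E by (unfold Omega in *; lia).
        replace (m - length l)%nat with 0%nat by (unfold Omega in *; lia).
        simpl. f_equal. apply (proj2 Hp); auto; lia.
      + rewrite app_nth1 by (unfold Omega in *; lia). apply Hl'; auto. lia. }
  destruct (Hprefix k (le_n _)) as [l [H1 H2]]. exists l; split; auto.
  intros i Hi. apply H2; auto. apply (proj1 Hp); auto.
Qed.

Lemma nth_map_seq {A} (f : nat -> A) k i d : (i < k)%nat -> nth i (map f (seq 0 k)) d = f i.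
Proof.
  intros H. rewrite (nth_indep _ d (f 0%nat)) by (rewrite length_map, length_seq; auto).
  rewrite map_nth, seq_nth; auto.
Qed.

Lemma permute_psi k theta tau0 : is_perm k theta -> length tau0 = k ->
  exists tau1, length tau1 = k /\
    forall s, length s = k -> permute k theta (psi tau0) s = psi tau1 s.
Proof.
  intros Hp Hl.
  destruct (is_perm_relabel k theta tau0 Hp Hl) as [tau1 [Hl1 Hrel]].
  exists tau1. split; auto. intros s Hs.
  set (s' := map (fun i => nth (theta i) s true) (seq 0 k)).
  assert (Hiff : forall t u : list Omega, length t = k -> length u = k ->
            (forall i, (i < k)%nat -> nth (theta i) u true = nth i t true) -> s' = t <-> s = u).
  { intros t u Ht Hu Htu. unfold s'. split; intros E.
    - apply nth_ext with (d := true) (d' := true); [unfold Omega in *; lia|].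
      intros j Hj. destruct (is_perm_surj k theta Hp j) as [i [Hi <-]]; [unfold Omega in *; lia|].
      rewrite Htu, <- E, nth_map_seq; auto.
    - subst u. apply nth_ext with (d := true) (d' := true);
        [rewrite length_map, length_seq; auto|].
      intros i Hi. rewrite length_map, length_seq in Hi. rewrite nth_map_seq; auto. }
  assert (E1 := Hiff tau0 tau1 Hl Hl1 Hrel).
  assert (E2 : s' = map negb tau0 <-> s = map negb tau1).
  { apply Hiff; rewrite ?length_map; auto. intros i Hi.
    rewrite !nth_map_negb by (unfold Omega in *; try pose proof (proj1 Hp i Hi); lia).
    f_equal; auto. }
  unfold permute, psi. fold s'.
  destruct (eqL s' tau0), (eqL s tau1), (eqL s' (map negb tau0)), (eqL s (map negb tau1));
    tauto || ring.
Qed.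

Lemma SYM_permute k theta tau0 : (1 <= k)%nat -> is_perm k theta -> length tau0 = k ->
  Pmass k (psi tau0) = Pmass k (permute k theta (psi tau0)).
Proof.
  intros Hk Hp Hl.
  destruct (permute_psi k theta tau0 Hp Hl) as [tau1 [Hl1 Heq]].
  unfold Pmass at 2.
  rewrite (sumR_ext _ (fun tau => if agree k (psi tau) (psi tau1) then 1 else 0)).
  - fold (Pmass k (psi tau1)). rewrite !Pmass_psi; auto.
  - intros tau. rewrite (agree_ext_r _ _ _ (psi tau1)); auto.
    intros s Hs. apply Heq, in_cube_length; auto.
Qed.

Lemma SYM_holds k : (1 <= k)%nat -> SYM k.
Proof.
  intros Hk. split.
  - intros; apply SYM_marginal; auto.
  - intros; apply SYM_permute; auto.
Qed.

(** * BAL and MIN *)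

Lemma phi_eq k mu : (1 <= k)%nat -> phi k mu = (1 - 2 / 2 ^ k) * (mu true + mu false) ^ k.
Proof.
  intros Hk. unfold phi.
  rewrite (sumR_ext_in _ (fun tau => (1 - 2 / 2 ^ k) * prodR mu tau)).
  - rewrite sumR_scal, sumR_cube_prodR; auto.
  - intros tau Ht. rewrite Epsi_psi; auto. apply in_cube_length; auto.
Qed.

Lemma BAL_holds k : (1 <= k)%nat -> BAL k.
Proof.
  intros Hk. split.
  - intros mu1 mu2 t [_ H1] [_ H2] Ht. rewrite !phi_eq by auto.
    replace (t * mu1 true + (1 - t) * mu2 true + (t * mu1 false + (1 - t) * mu2 false))
      with (t * (mu1 true + mu1 false) + (1 - t) * (mu2 true + mu2 false)) by ring.
    rewrite H1, H2. replace (t * 1 + (1 - t) * 1) with 1 by ring. lra.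
  - intros mu [_ H]. rewrite !phi_eq, H by auto. replace (/2 + /2) with 1 by field. lra.
Qed.

Lemma Epsi_psi_mul k s u : (1 <= k)%nat -> length s = k -> length u = k ->
  Epsi k (fun ps => ps s * ps u) = 1 - 2 / 2 ^ k - 2 / 2 ^ k * psi u s.
Proof.
  intros Hk Hs Hu. unfold Epsi.
  rewrite (sumR_ext _ (fun t => psi s t * psi u t)) by (intros t; rewrite !(psi_comm t); ring).
  rewrite sumR_psi_mul by auto.
  rewrite (sumR_ext _ (fun t => psi u t * 1)), sumR_psi_mul, sumR_cube_const by (auto || (intros; ring)).
  rewrite (psi_comm u (map negb s)), psi_negb, (psi_comm s u).
  field. apply pow_nonzero; lra.
Qed.

Definition pair_weight (rho : Omega -> Omega -> R) (s u : list Omega) : R :=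
  prodR (fun p => rho (fst p) (snd p)) (combine s u).

Lemma sumR_cube_pair_weight k rho :
  sumR (fun s => sumR (fun u => pair_weight rho s u) (cube k)) (cube k)
  = (rho true true + rho true false + rho false true + rho false false) ^ k.
Proof.
  induction k; [simpl; unfold pair_weight; simpl; lra|].
  rewrite sumR_cube_S, !(sumR_ext _ _ _ (fun s => sumR_cube_S _ k)), !sumR_plus.
  unfold pair_weight in *; simpl.
  assert (Hscal : forall c : R, sumR (fun s => sumR (fun u => c *
            prodR (fun p => rho (fst p) (snd p)) (combine s u)) (cube k)) (cube k)
          = c * (rho true true + rho true false + rho false true + rho false false) ^ k).
  { intros c. rewrite <- IHk, <- sumR_scal. apply sumR_ext; intros; apply sumR_scal. }
  rewrite !Hscal. ring.
Qed.

Lemma sumR_cube_pair_weight_diag k rho :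
  sumR (fun s => pair_weight rho s s) (cube k) = (rho true true + rho false false) ^ k.
Proof.
  induction k; [simpl; unfold pair_weight; simpl; lra|].
  rewrite sumR_cube_S. unfold pair_weight in *; simpl. rewrite !sumR_scal, IHk. ring.
Qed.

Lemma sumR_cube_pair_weight_antidiag k rho :
  sumR (fun s => pair_weight rho s (map negb s)) (cube k) = (rho true false + rho false true) ^ k.
Proof.
  induction k; [simpl; unfold pair_weight; simpl; lra|].
  rewrite sumR_cube_S. unfold pair_weight in *; simpl. rewrite !sumR_scal, IHk. ring.
Qed.

Lemma varphi_eq k rho : (1 <= k)%nat -> varphi k rho =
  (1 - 4 / 2 ^ k) * (rho true true + rho true false + rho false true + rho false false) ^ k
  + 2 / 2 ^ k * ((rho true true + rho false false) ^ k + (rho true false + rho false true) ^ k).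
Proof.
  intros Hk. unfold varphi. fold (pair_weight rho).
  rewrite (sumR_ext_in _ (fun s => (1 - 4 / 2 ^ k) * sumR (fun u => pair_weight rho s u) (cube k)
        + 2 / 2 ^ k * (pair_weight rho s s + pair_weight rho s (map negb s)))).
  - rewrite sumR_plus, !sumR_scal, sumR_plus, sumR_cube_pair_weight,
      sumR_cube_pair_weight_diag, sumR_cube_pair_weight_antidiag. ring.
  - intros s Hs. apply in_cube_length in Hs.
    rewrite (sumR_ext_in _ (fun u => (1 - 2 / 2 ^ k) * pair_weight rho s u
                                      - 2 / 2 ^ k * (psi s u * pair_weight rho s u))).
    + rewrite sumR_minus, !sumR_scal, sumR_psi_mul by auto.
      set (S := sumR _ (cube k)). lra.
    + intros u Hu. rewrite Epsi_psi_mul, psi_comm by (auto; apply in_cube_length; auto).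
      unfold pair_weight. ring.
Qed.

Lemma sub_mul_pow_sub_nonneg a b n : 0 <= a -> 0 <= b -> 0 <= (a - b) * (a ^ n - b ^ n).
Proof.
  intros Ha Hb. destruct (Rle_dec b a).
  - apply Rmult_le_pos; [lra|]. assert (b ^ n <= a ^ n) by (apply pow_incr; lra). lra.
  - assert (a ^ n <= b ^ n) by (apply pow_incr; lra).
    replace ((a - b) * (a ^ n - b ^ n)) with ((b - a) * (b ^ n - a ^ n)) by ring.
    apply Rmult_le_pos; lra.
Qed.

Lemma two_half_pow_lt_pow_add a b k : 0 <= a -> 0 <= b -> a + b = 1 -> a <> b -> (2 <= k)%nat ->
  2 * (/ 2) ^ k < a ^ k + b ^ k.
Proof.
  intros Ha Hb Hab Hne Hk. induction k as [|k IH]; [lia|].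
  destruct (Nat.eq_dec k 1) as [->|Hk1].
  - assert (0 < (a - b) * (a - b)) by (apply Rsqr_pos_lt; lra). simpl. nra.
  - pose proof (IH ltac:(lia)). pose proof (sub_mul_pow_sub_nonneg a b k Ha Hb).
    replace (a ^ S k + b ^ S k) with ((a ^ k + b ^ k) * (a + b) / 2 + (a - b) * (a ^ k - b ^ k) / 2)
      by (simpl; field).
    rewrite Hab. simpl. lra.
Qed.

Lemma MIN_holds k : (2 <= k)%nat -> MIN k.
Proof.
  intros Hk rho [Hpos [Hsum [Hm1 Hm2]]].
  pose proof (Hm1 true). pose proof (Hm1 false). pose proof (Hm2 true). pose proof (Hm2 false).
  destruct (Req_dec (rho true true) (/ 4)) as [E|E]; [left; intros [] []; lra|right].
  rewrite !varphi_eq by lia.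
  set (a := rho true true + rho false false). set (b := rho true false + rho false true).
  assert (Hab : a + b = 1) by (unfold a, b; lra).
  assert (Ha : 0 <= a) by (unfold a; pose proof (Hpos true true); pose proof (Hpos false false); lra).
  assert (Hb : 0 <= b) by (unfold b; pose proof (Hpos true false); pose proof (Hpos false true); lra).
  assert (Hne : a <> b) by (unfold a, b; lra).
  pose proof (two_half_pow_lt_pow_add a b k Ha Hb Hab Hne Hk).
  replace (/4 + /4 + /4 + /4) with 1 by field. replace (/4 + /4) with (/2) by field.
  replace (rho true true + rho true false + rho false true + rho false false) with 1 by lra.
  assert (0 < 2 / 2 ^ k) by (apply Rdiv_lt_0_compat; [lra|apply pow_lt; lra]).
  nra.
Qed.

(** * POS *)

Lemma continuity_cst c : continuity (fun _ => c).
Proof. apply continuity_const. intros x y; reflexivity. Qed.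

Lemma continuity_pow_fun f n : continuity f -> continuity (fun x => f x ^ n).
Proof. intros H; induction n; simpl; [apply continuity_cst|apply continuity_mult; auto]. Qed.

Lemma continuity_mu_of b : continuity (fun x => mu_of x b).
Proof.
  assert (Hid : continuity id) by apply derivable_continuous, derivable_id.
  destruct b; simpl; [exact Hid|].
  apply (continuity_minus (fun _ => 1) id); [apply continuity_cst|exact Hid].
Qed.

Lemma continuity_sumR {A} (T : list A) (d : A -> R) (g : A -> R -> R) :
  (forall a, In a T -> continuity (g a)) -> continuity (fun x => sumR (fun a => d a * g a x) T).
Proof.
  induction T as [|a T IH]; intros H; simpl; [apply continuity_cst|].
  apply continuity_plus; [apply continuity_mult; [apply continuity_cst|apply H; left; auto]|].
  apply IH; intros; apply H; right; auto.
Qed.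

Lemma pint_ext (m : PMeas) f g : (forall x, f x = g x) -> pint m f = pint m g.
Proof. intros; apply pint_local; auto. Qed.

Lemma pint_sumR {A} (m : PMeas) (T : list A) (d : A -> R) (g : A -> R -> R) :
  (forall a, In a T -> continuity (g a)) ->
  pint m (fun x => sumR (fun a => d a * g a x) T) = sumR (fun a => d a * pint m (g a)) T.
Proof.
  induction T as [|a T IH]; intros H; simpl.
  - rewrite (pint_ext m _ (fun x => 0 * (fun _ => 1) x + 0 * (fun _ => 1) x)) by (intros; lra).
    rewrite pint_lin by apply continuity_cst. lra.
  - rewrite (pint_ext m _ (fun x => d a * g a x + 1 * (fun x => sumR (fun a => d a * g a x) T) x))
      by (intros; simpl; lra).
    rewrite pint_lin, IH; [lra| | |apply continuity_sumR];
      intros; apply H; simpl; auto.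
Qed.

Lemma iterI_ext ms F G : (forall ys, length ys = length ms -> F ys = G ys) ->
  iterI (map pint ms) F = iterI (map pint ms) G.
Proof.
  revert F G; induction ms; intros F G H; simpl; auto.
  apply pint_ext. intros x. apply IHms. intros; apply H; simpl; auto.
Qed.

Definition prodF (fs : list (R -> R)) (ys : list R) : R :=
  prodR (fun p => fst p (snd p)) (combine fs ys).

Definition prodI (ms : list PMeas) (fs : list (R -> R)) : R :=
  prodR (fun p => pint (fst p) (snd p)) (combine ms fs).

(* [pint] is only known to be linear on continuous functions, hence integrands are
   handled as combinations of products of continuous one-variable factors. *)
Lemma iterI_sumR_prodF (terms : list (R * list (R -> R))) ms :
  (forall a, In a terms -> length (snd a) = length ms /\ forall f, In f (snd a) -> continuity f) ->
  iterI (map pint ms) (fun ys => sumR (fun a => fst a * prodF (snd a) ys) terms)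
  = sumR (fun a => fst a * prodI ms (snd a)) terms.
Proof.
  revert terms. induction ms as [|m ms IH]; intros terms H.
  - simpl. apply sumR_ext; intros [c []]; reflexivity.
  - set (head (a : R * list (R -> R)) := hd (fun _ : R => 1) (snd a)).
    set (peel x (a : R * list (R -> R)) := (fst a * head a x, tl (snd a))).
    assert (Hsnd : forall a, In a terms -> snd a = head a :: tl (snd a)).
    { intros a Ha. destruct (H a Ha) as [Hl _]. unfold head.
      destruct (snd a); simpl in *; [lia|auto]. }
    simpl. rewrite (pint_ext m _ (fun x => sumR (fun a => (fst a * prodI ms (tl (snd a))) * head a x) terms)).
    + rewrite pint_sumR.
      * apply sumR_ext_in. intros a Ha. unfold prodI. rewrite (Hsnd a Ha). simpl. ring.
      * intros a Ha. destruct (H a Ha) as [_ Hc]. apply Hc. rewrite (Hsnd a Ha); left; auto.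
    + intros x. transitivity (sumR (fun a => fst a * prodI ms (snd a)) (map (peel x) terms)).
      * rewrite <- IH.
        -- apply iterI_ext. intros ys _. rewrite sumR_map. apply sumR_ext_in. intros a Ha.
           unfold prodF. rewrite (Hsnd a Ha). simpl. ring.
        -- intros a' Ha'. apply in_map_iff in Ha'. destruct Ha' as [a [<- Ha]].
           destruct (H a Ha) as [Hl Hc]. rewrite (Hsnd a Ha) in Hl, Hc. simpl in Hl |- *.
           split; [lia|]. intros; apply Hc; right; auto.
      * rewrite sumR_map. apply sumR_ext; intros a. simpl. ring.
Qed.

Definition config_weight (t : list Omega) (xs : list R) : R :=
  prodR (fun p => mu_of (snd p) (fst p)) (combine t xs).

Lemma sumR_cube_config_weight k xs : length xs = k ->
  sumR (fun t => config_weight t xs) (cube k) = 1.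
Proof.
  revert xs; induction k; intros [|x xs] Hl; simpl in Hl; try lia; [unfold config_weight; simpl; lra|].
  rewrite sumR_cube_S. unfold config_weight in *; simpl.
  rewrite !sumR_scal, IHk by lia. ring.
Qed.

Lemma one_sub_Wt_psi k t xs : (1 <= k)%nat -> length t = k -> length xs = k ->
  1 - Wt k (psi t) xs = config_weight t xs + config_weight (map negb t) xs.
Proof.
  intros Hk Ht Hx.
  change (Wt k (psi t) xs) with (sumR (fun s => psi t s * config_weight s xs) (cube k)).
  rewrite sumR_psi_mul, sumR_cube_config_weight by auto. ring.
Qed.

(* The weight [mu_x(b)^j mu_x(-b)^(l-j)] of one coordinate in the [j]-th binomial term. *)
Definition nae_factor (l j : nat) (b : Omega) (x : R) : R :=
  mu_of x b ^ j * mu_of x (negb b) ^ (l - j).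

Lemma prodF_nil fs : prodF fs nil = 1.
Proof. destruct fs; reflexivity. Qed.

Lemma prodF_app fs1 fs2 ys1 ys2 : length fs1 = length ys1 ->
  prodF (fs1 ++ fs2) (ys1 ++ ys2) = prodF fs1 ys1 * prodF fs2 ys2.
Proof.
  revert ys1; induction fs1 as [|f fs1 IH]; intros [|y ys1] H; simpl in H; try lia.
  - unfold prodF at 2; simpl. ring.
  - unfold prodF in *; simpl. rewrite IH by lia. ring.
Qed.

Lemma prodF_cons f fs y ys : prodF (f :: fs) (y :: ys) = f y * prodF fs ys.
Proof. reflexivity. Qed.

Definition cst1 : R -> R := fun _ => 1.

Lemma prodF_repeat_cst1 n ys : prodF (repeat cst1 n) ys = 1.
Proof.
  revert ys; induction n; intros [|y ys]; try apply prodF_nil; [reflexivity|].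
  unfold prodF in *; simpl. rewrite IHn. unfold cst1; ring.
Qed.

Lemma pow_config_weight_mul l j t xs :
  config_weight t xs ^ j * config_weight (map negb t) xs ^ (l - j)
  = prodF (map (nae_factor l j) t) xs.
Proof.
  revert xs; induction t as [|b t IH]; intros [|x xs];
    unfold config_weight, prodF, nae_factor in *; simpl; rewrite ?pow1; try ring.
  rewrite !Rpow_mult_distr, <- IH. ring.
Qed.

Lemma sum_f_R0_sumR f n : sum_f_R0 f n = sumR f (seq 0 (S n)).
Proof.
  induction n; [simpl; lra|].
  rewrite seq_S, sumR_app. simpl. rewrite IHn. simpl. lra.
Qed.

Lemma pow_config_weight_binomial l t xs :
  (config_weight t xs + config_weight (map negb t) xs) ^ l
  = sumR (fun j => C l j * prodF (map (nae_factor l j) t) xs) (seq 0 (S l)).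
Proof.
  rewrite binomial, sum_f_R0_sumR. apply sumR_ext. intros j.
  rewrite <- pow_config_weight_mul. ring.
Qed.

(* For each binomial index [j], the three summands of the POS integrand for
   [psi_(t0 :: t')]; the first [k] coordinates carry the [rho_i], the last [k] the [rho'_i]. *)
Definition POS_terms (k' l : nat) (t0 : Omega) (t' : list Omega) : list (R * list (R -> R)) :=
  flat_map (fun j =>
    let h := nae_factor l j in
    [ (C l j, map h (t0 :: t') ++ repeat cst1 (S k'));
      (INR k' * C l j, repeat cst1 (S k') ++ map h (t0 :: t'));
      (- (INR (S k') * C l j), (h t0 :: repeat cst1 k') ++ cst1 :: map h t') ])
    (seq 0 (S l)).

Lemma POS_integrand_eq k' l t0 t' x0 xs x0' xs' :
  length t' = k' -> length xs = k' -> length xs' = k' ->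
  POS_integrand (S k') l (psi (t0 :: t')) ((x0 :: xs) ++ x0' :: xs')
  = sumR (fun a => fst a * prodF (snd a) ((x0 :: xs) ++ x0' :: xs')) (POS_terms k' l t0 t').
Proof.
  intros Ht Hx Hx'. unfold POS_integrand. cbv zeta.
  assert (Hlen : length (x0 :: xs) = S k') by (simpl; lia).
  assert (Hfirst : firstn (S k') ((x0 :: xs) ++ x0' :: xs') = x0 :: xs)
    by (rewrite <- Hlen, firstn_app, firstn_all, Nat.sub_diag, app_nil_r; auto).
  assert (Hskip : skipn (S k') ((x0 :: xs) ++ x0' :: xs') = x0' :: xs')
    by (rewrite <- Hlen, skipn_app, skipn_all, Nat.sub_diag; auto).
  rewrite Hfirst, Hskip. simpl nth. simpl skipn.
  rewrite !one_sub_Wt_psi by (simpl; lia).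
  rewrite !pow_config_weight_binomial.
  unfold POS_terms. rewrite sumR_flat_map.
  rewrite <- !sumR_scal, <- sumR_plus, <- sumR_minus. apply sumR_ext. intros j.
  cbn [sumR fold_right fst snd].
  rewrite !prodF_app by (simpl; rewrite ?length_map, ?repeat_length; lia).
  rewrite map_cons, !prodF_cons, !prodF_repeat_cst1, S_INR. unfold cst1. ring.
Qed.

(* Weighted AM-GM for [A^(n+1)] and [n] copies of [B^(n+1)]; the step uses
   [B * (A^(n+1) - B^(n+1)) <= A * (A^(n+1) - B^(n+1))]. *)
Lemma am_gm_pow n A B : 0 <= A -> 0 <= B ->
  INR (S n) * A * B ^ n <= A ^ S n + INR n * B ^ S n.
Proof.
  intros HA HB. induction n as [|n IH]; [simpl; lra|].
  pose proof (sub_mul_pow_sub_nonneg A B (S n) HA HB).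
  assert (0 <= B * (A ^ S n + INR n * B ^ S n - INR (S n) * A * B ^ n))
    by (apply Rmult_le_pos; lra).
  rewrite !S_INR in *. simpl in *. nra.
Qed.

Lemma C_nonneg n p : 0 <= C n p.
Proof.
  unfold C. apply Rmult_le_pos; [apply pos_INR|]. apply Rlt_le, Rinv_0_lt_compat.
  apply Rmult_lt_0_compat; apply lt_0_INR, Nat.neq_0_lt_0, fact_neq_0.
Qed.

Lemma continuity_nae_factor l j b : continuity (nae_factor l j b).
Proof. apply continuity_mult; apply continuity_pow_fun, continuity_mu_of. Qed.

Lemma prodI_cons m ms f fs : prodI (m :: ms) (f :: fs) = pint m f * prodI ms fs.
Proof. reflexivity. Qed.

Lemma prodI_app ms1 ms2 fs1 fs2 : length ms1 = length fs1 ->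
  prodI (ms1 ++ ms2) (fs1 ++ fs2) = prodI ms1 fs1 * prodI ms2 fs2.
Proof.
  revert fs1; induction ms1 as [|m ms1 IH]; intros [|f fs1] H; simpl in H; try lia.
  - unfold prodI at 2; simpl. ring.
  - rewrite <- !app_comm_cons, !prodI_cons, IH by lia. ring.
Qed.

Lemma prodI_repeat_cst1 m n : prodI (repeat m n) (repeat cst1 n) = 1.
Proof.
  induction n as [|n IH]; [reflexivity|]. simpl. rewrite prodI_cons, IH.
  unfold cst1. rewrite pint_one. ring.
Qed.

Lemma prodI_repeat_map m n g (t : list Omega) : length t = n ->
  prodI (repeat m n) (map g t) = prodR (fun b => pint m (g b)) t.
Proof.
  revert t; induction n as [|n IH]; intros [|b t] H; simpl in H; try lia; [reflexivity|].
  simpl. rewrite prodI_cons, IH by lia. reflexivity.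
Qed.

Definition nae_moment (pi : PMeas) (l j : nat) (b : Omega) : R := pint pi (nae_factor l j b).

Lemma nae_moment_nonneg pi l j b : 0 <= nae_moment pi l j b.
Proof.
  apply pint_pos; [apply continuity_nae_factor|].
  intros x Hx. unfold nae_factor. apply Rmult_le_pos; apply pow_le; destruct b; simpl; lra.
Qed.

Lemma split_length_add {A} n m (ys : list A) : length ys = (S n + S m)%nat ->
  exists x0 xs x0' xs', ys = (x0 :: xs) ++ x0' :: xs' /\ length xs = n /\ length xs' = m.
Proof.
  intros H. rewrite <- (firstn_skipn (S n) ys).
  assert (H1 : length (firstn (S n) ys) = S n) by (rewrite length_firstn; lia).
  assert (H2 : length (skipn (S n) ys) = S m) by (rewrite length_skipn; lia).
  destruct (firstn (S n) ys) as [|x0 xs], (skipn (S n) ys) as [|x0' xs'];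
    simpl in H1, H2; try lia.
  exists x0, xs, x0', xs'. auto.
Qed.

Lemma POS_terms_wf k' l t0 t' : length t' = k' -> forall a, In a (POS_terms k' l t0 t') ->
  length (snd a) = (S k' + S k')%nat /\ forall f, In f (snd a) -> continuity f.
Proof.
  intros Ht a Ha. unfold POS_terms in Ha. apply in_flat_map in Ha. destruct Ha as [j [_ Ha]].
  assert (Hcont : forall f, f = cst1 \/ (exists b, f = nae_factor l j b) -> continuity f).
  { intros f [->|[b ->]]; [apply continuity_cst|apply continuity_nae_factor]. }
  simpl in Ha. destruct Ha as [<-|[<-|[<-|[]]]]; cbn [snd];
    (split; [simpl; rewrite ?length_app, ?length_map, ?repeat_length; simpl;
             rewrite ?length_map, ?repeat_length; lia|]);
    intros f Hf; apply Hcont;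
    repeat match type of Hf with
    | In _ (_ ++ _) => apply in_app_or in Hf
    | In _ (_ :: _) => destruct Hf as [Hf|Hf]
    | _ \/ _ => destruct Hf as [Hf|Hf]
    | In _ (map _ _) => apply in_map_iff in Hf; destruct Hf as [b [<- _]]; right; exists b; reflexivity
    | In _ (repeat _ _) => apply repeat_spec in Hf; left; exact Hf
    | _ = f => subst f; first [left; reflexivity | right; eexists; reflexivity]
    | False => contradiction
    end.
Qed.

Lemma iterI_POS_integrand pi pi' k' l t0 t' : length t' = k' ->
  iterI (repeat (pint pi) (S k') ++ repeat (pint pi') (S k')) (POS_integrand (S k') l (psi (t0 :: t')))
  = sumR (fun j => C l j * (prodR (nae_moment pi l j) (t0 :: t')
                             + INR k' * prodR (nae_moment pi' l j) (t0 :: t')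
                             - INR (S k') * (nae_moment pi l j t0 * prodR (nae_moment pi' l j) t')))
      (seq 0 (S l)).
Proof.
  intros Ht.
  replace (repeat (pint pi) (S k') ++ repeat (pint pi') (S k'))
    with (map pint (repeat pi (S k') ++ repeat pi' (S k')))
    by (rewrite map_app, !map_repeat; reflexivity).
  rewrite (iterI_ext _ _ (fun ys => sumR (fun a => fst a * prodF (snd a) ys) (POS_terms k' l t0 t'))).
  2:{ intros ys Hys. rewrite length_app, !repeat_length in Hys.
      destruct (split_length_add k' k' ys Hys) as [x0 [xs [x0' [xs' [-> [Hx Hx']]]]]].
      apply POS_integrand_eq; auto. }
  rewrite iterI_sumR_prodF.
  2:{ rewrite length_app, !repeat_length. apply POS_terms_wf; auto. }
  unfold POS_terms. rewrite sumR_flat_map. apply sumR_ext. intros j.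
  cbn [sumR fold_right fst snd].
  do 3 rewrite prodI_app by (simpl; rewrite ?length_map, ?repeat_length; lia).
  rewrite !prodI_repeat_cst1, !prodI_repeat_map by (simpl; lia).
  cbn [repeat]. rewrite !prodI_cons, prodI_repeat_cst1, prodI_repeat_map by lia.
  unfold nae_moment, cst1. rewrite pint_one. simpl. ring.
Qed.

Lemma POS_holds k' : POS (S k').
Proof.
  intros pi pi' l _ _ Hl. unfold Epsi.
  apply Rmult_le_pos; [left; apply Rinv_0_lt_compat, pow_lt; lra|].
  rewrite sumR_cube_S, <- sumR_plus.
  rewrite (sumR_ext_in _ (fun t' => sumR (fun j => C l j *
      ((nae_moment pi l j true + nae_moment pi l j false) * prodR (nae_moment pi l j) t'
       + INR k' * ((nae_moment pi' l j true + nae_moment pi' l j false) * prodR (nae_moment pi' l j) t')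
       - INR (S k') * ((nae_moment pi l j true + nae_moment pi l j false) * prodR (nae_moment pi' l j) t')))
      (seq 0 (S l)))).
  2:{ intros t' Ht'. apply in_cube_length in Ht'.
      rewrite !iterI_POS_integrand, <- sumR_plus by auto.
      apply sumR_ext; intros j. simpl. ring. }
  rewrite sumR_swap. apply sumR_nonneg. intros j _.
  rewrite sumR_scal. apply Rmult_le_pos; [apply C_nonneg|].
  rewrite sumR_minus, sumR_plus, !sumR_scal, !sumR_cube_prodR.
  pose proof (am_gm_pow k' (nae_moment pi l j true + nae_moment pi l j false)
                (nae_moment pi' l j true + nae_moment pi' l j false)).
  pose proof (nae_moment_nonneg pi l j true). pose proof (nae_moment_nonneg pi l j false).
  pose proof (nae_moment_nonneg pi' l j true). pose proof (nae_moment_nonneg pi' l j false).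
  simpl in *. nra.
Qed.

(** * UNI *)

Close Scope R_scope.

Lemma adj_sym cs u v : adj cs u v -> adj cs v u.
Proof. destruct u, v; simpl; auto. Qed.

Lemma adj_irrefl cs u : ~ adj cs u u.
Proof. destruct u; simpl; auto. Qed.

Fixpoint adj_chain (cs : list constraint) (L : list vertex) : Prop :=
  match L with
  | u :: ((w :: _) as L') => adj cs u w /\ adj_chain cs L'
  | _ => True
  end.

Lemma adj_chain_app_l cs L1 L2 : adj_chain cs (L1 ++ L2) -> adj_chain cs L1.
Proof.
  induction L1 as [|x [|y L1] IH]; simpl; auto.
  intros [H1 H2]. split; [exact H1|apply IH; exact H2].
Qed.

Lemma adj_chain_snoc cs L x y : adj_chain cs (L ++ [x]) -> adj cs x y -> adj_chain cs (L ++ [x; y]).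
Proof.
  induction L as [|z [|z' L] IH]; simpl; intros H1 H2; tauto.
Qed.

Lemma adj_chain_nth cs L d i : adj_chain cs L -> S i < length L ->
  adj cs (nth i L d) (nth (S i) L d).
Proof.
  revert i; induction L as [|x [|y L] IH]; intros i H Hi; simpl in Hi; try lia.
  destruct H as [H1 H2]. destruct i; simpl; auto. apply (IH i H2). simpl; lia.
Qed.

Lemma adj_chain_rev cs L : adj_chain cs L -> adj_chain cs (rev L).
Proof.
  induction L as [|x [|y L] IH]; simpl; auto.
  intros [H1 H2]. specialize (IH H2). simpl in IH.
  rewrite <- app_assoc. apply adj_chain_snoc; auto. apply adj_sym; auto.
Qed.

Lemma is_cycle_of_chain cs u M w : NoDup (u :: M ++ [w]) -> adj_chain cs (u :: M ++ [w]) ->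
  M <> nil -> adj cs w u -> is_cycle cs (u :: M ++ [w]).
Proof.
  intros Hnd Hch HM Hwu.
  assert (Hlen : length (u :: M ++ [w]) = S (S (length M))) by (simpl; rewrite length_app; simpl; lia).
  split; [rewrite Hlen; destruct M; [congruence|simpl; lia]|]. split; auto.
  intros i Hi. rewrite Hlen in Hi |- *.
  destruct (Nat.eq_dec (S i) (S (S (length M)))) as [E|E].
  - rewrite E, Nat.Div0.mod_same. injection E as ->.
    simpl. rewrite app_nth2, Nat.sub_diag by lia. exact Hwu.
  - rewrite Nat.mod_small by lia. apply adj_chain_nth; auto. rewrite Hlen. lia.
Qed.

Lemma cycle_edge_in c u v : cycle_edge c u v -> In u c /\ In v c.
Proof.
  intros [i [Hi H]].
  assert (Hm : S i mod length c < length c) by (apply Nat.mod_upper_bound; lia).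
  destruct H as [[<- <-]|[<- <-]]; split; apply nth_In; auto.
Qed.

Lemma cycle_vertex_has_edge cs D x : is_cycle cs D -> In x D -> exists y, cycle_edge D x y.
Proof.
  intros _ Hx. apply (In_nth D x (VVar 0)) in Hx. destruct Hx as [i [Hi E]].
  exists (nth (S i mod length D) D (VVar 0)). exists i. auto.
Qed.

(* All cycles of a unicyclic graph have the same edges, hence the same vertices. *)
Lemma unicyclic_cycle_incl n cs C D : unicyclic n cs -> is_cycle cs C -> is_cycle cs D -> incl D C.
Proof.
  intros [_ [c [_ Hc]]] HC HD x Hx.
  destruct (cycle_vertex_has_edge cs D x HD Hx) as [y Hy].
  apply (Hc D HD), (Hc C HC), cycle_edge_in in Hy. tauto.
Qed.

Definition in_subgraph (n : nat) (cs : list constraint) (S : list nat) (v : vertex) : Prop :=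
  vvalid n cs v /\ match v with VCon a => In a S | VVar _ => True end.

Definition subgraph_path n cs S (L : list vertex) : Prop :=
  NoDup L /\ adj_chain cs L /\ Forall (in_subgraph n cs S) L.

Definition longest_path n cs S (L : list vertex) : Prop :=
  subgraph_path n cs S L /\ forall L', subgraph_path n cs S L' -> length L' <= length L.

Lemma subgraph_path_rev n cs S L : subgraph_path n cs S L -> subgraph_path n cs S (rev L).
Proof.
  intros [H1 [H2 H3]]. split; [apply NoDup_rev; auto|]. split; [apply adj_chain_rev; auto|].
  apply Forall_forall. intros x Hx. apply in_rev in Hx. rewrite Forall_forall in H3; auto.
Qed.

Lemma longest_path_rev n cs S L : longest_path n cs S L -> longest_path n cs S (rev L).
Proof. intros [H1 H2]. split; [apply subgraph_path_rev; auto|]. rewrite length_rev; auto. Qed.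

Lemma subgraph_path_length n cs S L : subgraph_path n cs S L -> length L <= n + length cs.
Proof.
  intros [Hnd [_ Hsub]].
  set (V := map VVar (seq 0 n) ++ map VCon (seq 0 (length cs))).
  replace (n + length cs) with (length V) by (unfold V; rewrite length_app, !length_map, !length_seq; auto).
  apply NoDup_incl_length; auto. intros v Hv. rewrite Forall_forall in Hsub.
  destruct (Hsub v Hv) as [Hval _]. unfold V. apply in_or_app.
  destruct v; simpl in Hval; [left|right]; apply in_map, in_seq; lia.
Qed.

Lemma exists_max_length {A} (P : list A -> Prop) N : (exists L, P L) ->
  (forall L, P L -> length L <= N) ->
  exists L, P L /\ forall L', P L' -> length L' <= length L.
Proof.
  intros [L0 H0] Hb.
  assert (Hm : forall m L, P L -> N - length L <= m ->
            exists L, P L /\ forall L', P L' -> length L' <= length L).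
  { induction m as [|m IH]; intros L HL Hm.
    - exists L; split; auto. intros L' HL'. specialize (Hb L' HL'). lia.
    - destruct (classic (exists L', P L' /\ length L < length L')) as [[L' [HL' Hlt]]|Hno].
      + apply (IH L' HL'). specialize (Hb L' HL'). lia.
      + exists L; split; auto. intros L' HL'. apply Nat.nlt_ge. intros Hlt. eauto. }
  apply (Hm (N - length L0) L0 H0). lia.
Qed.

Lemma longest_path_exists n cs S L0 : subgraph_path n cs S L0 ->
  exists L, longest_path n cs S L /\ length L0 <= length L.
Proof.
  intros H. destruct (exists_max_length (subgraph_path n cs S) (n + length cs)) as [L [H1 H2]]; eauto.
  - apply subgraph_path_length.
  - exists L. split; [split|]; auto.
Qed.

Lemma subgraph_path_in n cs S L v : subgraph_path n cs S L -> In v L -> in_subgraph n cs S v.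
Proof. intros [_ [_ H]]. rewrite Forall_forall in H. auto. Qed.

Lemma longest_path_head_closed n cs S u R w : longest_path n cs S (u :: R) -> adj cs u w ->
  in_subgraph n cs S w -> In w R.
Proof.
  intros [[Hnd [Hch Hsub]] Hmax] Hadj Hw.
  destruct (classic (In w (u :: R))) as [[<-|Hin]|Hout]; auto.
  - exfalso; eapply adj_irrefl; eauto.
  - assert (Hp : subgraph_path n cs S (w :: u :: R)).
    { split; [constructor; auto|]. split; [split; auto; apply adj_sym; auto|]. constructor; auto. }
    apply Hmax in Hp. simpl in Hp. lia.
Qed.

Lemma cycle_of_path_prefix n cs S u v1 A w B :
  subgraph_path n cs S (u :: v1 :: A ++ w :: B) -> adj cs w u ->
  is_cycle cs (u :: (v1 :: A) ++ [w]).
Proof.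
  intros [Hnd [Hch _]] Hwu.
  assert (E : u :: v1 :: A ++ w :: B = (u :: (v1 :: A) ++ [w]) ++ B)
    by (simpl; rewrite <- app_assoc; reflexivity).
  rewrite E in Hnd, Hch. apply is_cycle_of_chain; try discriminate; auto.
  - eapply NoDup_app_remove_r; eauto.
  - eapply adj_chain_app_l; eauto.
Qed.

Lemma subgraph_constraint k n cs S a : csp_wf k n cs -> in_subgraph n cs S (VCon a) ->
  exists c, nth_error cs a = Some c /\ length (cvars c) = k /\ NoDup (cvars c) /\
    (forall x, In x (cvars c) -> x < n) /\ In a S.
Proof.
  intros Hwf [Hv HS]. simpl in Hv.
  destruct (nth_error cs a) as [c|] eqn:Hc; [|apply nth_error_None in Hc; lia].
  destruct (Hwf c (nth_error_In _ _ Hc)) as [_ [H1 [H2 H3]]]. exists c; auto.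
Qed.

Lemma NoDup_split_lt {A} (L A1 B1 A2 B2 : list A) x1 x2 : NoDup L ->
  L = A1 ++ x1 :: B1 -> L = A2 ++ x2 :: B2 -> In x2 A1 -> length A2 < length A1.
Proof.
  intros Hnd E1 E2 Hin. destruct (In_nth A1 x2 x2 Hin) as [i [Hi Ei]].
  assert (Hnth : nth i L x2 = nth (length A2) L x2)
    by (rewrite E2 at 2; rewrite nth_middle, E1, app_nth1; auto).
  assert (i = length A2); [|lia].
  apply (proj1 (NoDup_nth L x2) Hnd); auto; [rewrite E1|rewrite E2]; rewrite length_app; simpl; lia.
Qed.

Lemma exists_two_others (l : list nat) y : NoDup l -> 3 <= length l ->
  exists x1 x2, In x1 l /\ In x2 l /\ x1 <> x2 /\ x1 <> y /\ x2 <> y.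
Proof.
  intros Hnd Hl. destruct l as [|a [|b [|c l]]]; simpl in Hl; try lia.
  apply NoDup_cons_iff in Hnd as [Ha Hnd]. apply NoDup_cons_iff in Hnd as [Hb _].
  assert (a <> b) by (intros ->; simpl in Ha; tauto).
  assert (a <> c) by (intros ->; simpl in Ha; tauto).
  assert (b <> c) by (intros ->; simpl in Hb; tauto).
  destruct (Nat.eq_dec a y) as [->|]; [exists b, c|destruct (Nat.eq_dec b y) as [->|];
    [exists a, c|exists a, b]]; simpl; repeat split; auto.
Qed.

(* Two further variables of a constraint at the head of a longest path close two
   cycles, one of which misses a vertex of the other. *)
Lemma longest_path_head_not_constraint k n cs S a L : 3 <= k -> csp_wf k n cs ->
  unicyclic n cs -> longest_path n cs S (VCon a :: L) -> False.
Proof.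
  intros Hk Hwf Huni Hlong.
  assert (Hsub : in_subgraph n cs S (VCon a))
    by (eapply subgraph_path_in; [apply Hlong|left; auto]).
  destruct (subgraph_constraint k n cs S a Hwf Hsub) as [c [Hc [Hlen [Hndv [Hlt HaS]]]]].
  assert (Hclosed : forall x, In x (cvars c) -> In (VVar x) L).
  { intros x Hx. eapply longest_path_head_closed; eauto; [simpl; eauto|split; simpl; auto]. }
  destruct L as [|v1 R].
  - destruct (cvars c) as [|y ys]; [simpl in Hlen; lia|]. apply (Hclosed y); left; auto.
  - assert (Hav1 : adj cs (VCon a) v1) by apply Hlong.
    destruct v1 as [y|b]; [|destruct Hav1].
    assert (Hcyc : forall x, In x (cvars c) -> x <> y -> exists A B, R = A ++ VVar x :: B /\
              is_cycle cs (VCon a :: (VVar y :: A) ++ [VVar x])).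
    { intros x Hx Hxy. destruct (Hclosed x Hx) as [E|HR]; [congruence|].
      destruct (in_split _ _ HR) as [A [B ->]]. exists A, B. split; auto.
      eapply cycle_of_path_prefix; [apply Hlong|simpl; eauto]. }
    destruct (exists_two_others (cvars c) y Hndv ltac:(lia)) as [x1 [x2 [Hx1 [Hx2 [H12 [H1y H2y]]]]]].
    destruct (Hcyc x1 Hx1 H1y) as [A1 [B1 [E1 HC1]]], (Hcyc x2 Hx2 H2y) as [A2 [B2 [E2 HC2]]].
    assert (HndR : NoDup R) by (destruct Hlong as [[Hnd _] _]; inversion Hnd; inversion H2; auto).
    assert (Hx2C1 := unicyclic_cycle_incl n cs _ _ Huni HC1 HC2 (VVar x2)).
    assert (Hx1C2 := unicyclic_cycle_incl n cs _ _ Huni HC2 HC1 (VVar x1)).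
    simpl in Hx2C1, Hx1C2. rewrite !in_app_iff in Hx2C1, Hx1C2. simpl in Hx2C1, Hx1C2.
    assert (In (VVar x2) A1) by (destruct Hx2C1; intuition congruence).
    assert (In (VVar x1) A2) by (destruct Hx1C2; intuition congruence).
    pose proof (NoDup_split_lt R A1 B1 A2 B2 _ _ HndR E1 E2 H).
    pose proof (NoDup_split_lt R A2 B2 A1 B1 _ _ HndR E2 E1 H0). lia.
Qed.

Definition no_private_var (cs : list constraint) (S : list nat) : Prop :=
  forall a c, In a S -> nth_error cs a = Some c -> forall x, In x (cvars c) ->
    exists b c', In b S /\ b <> a /\ nth_error cs b = Some c' /\ In x (cvars c').

Lemma longest_path_var_head_cycle n cs S x v1 R : no_private_var cs S ->
  longest_path n cs S (VVar x :: v1 :: R) ->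
  exists A b B, R = A ++ VCon b :: B /\ is_cycle cs (VVar x :: (v1 :: A) ++ [VCon b]).
Proof.
  intros Hnp Hlong.
  assert (Hxv1 : adj cs (VVar x) v1) by apply Hlong.
  destruct v1 as [y|a]; [destruct Hxv1|]. destruct Hxv1 as [c [Hc Hx]].
  destruct (subgraph_path_in n cs S _ (VCon a) (proj1 Hlong)) as [_ HaS]; [right; left; auto|].
  destruct (Hnp a c HaS Hc x Hx) as [b [c' [HbS [Hba [Hc' Hx']]]]].
  assert (Hxb : adj cs (VVar x) (VCon b)) by (simpl; eauto).
  assert (HbR : In (VCon b) R).
  { assert (Hb : in_subgraph n cs S (VCon b))
      by (split; auto; simpl; apply nth_error_Some; congruence).
    destruct (longest_path_head_closed n cs S _ _ _ Hlong Hxb Hb) as [E|E]; [congruence|auto]. }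
  destruct (in_split _ _ HbR) as [A [B ->]]. exists A, b, B. split; auto.
  eapply cycle_of_path_prefix; [apply Hlong|apply adj_sym; auto].
Qed.

Lemma NoDup_app_last_in {A} (C B P0 : list A) z : NoDup (C ++ B) -> C ++ B = P0 ++ [z] ->
  In z C -> B = nil.
Proof.
  intros Hnd E Hz. destruct B as [|b B0 z'] using rev_ind; auto. exfalso.
  rewrite app_assoc in E, Hnd. apply app_inj_tail in E as [_ ->].
  apply (NoDup_remove_2 (C ++ B0) [] z); auto. rewrite app_nil_r. apply in_or_app; auto.
Qed.

(* Both ends of a longest path are variables lying on cycles; the cycle at the first
   end is a prefix ending in a constraint, so it cannot contain the last vertex. *)
Lemma no_private_var_false k n cs S a : 3 <= k -> csp_wf k n cs -> unicyclic n cs ->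
  In a S -> a < length cs -> no_private_var cs S -> False.
Proof.
  intros Hk Hwf Huni HaS Ha Hnp.
  assert (Hsub : in_subgraph n cs S (VCon a)) by (split; auto).
  destruct (subgraph_constraint k n cs S a Hwf Hsub) as [c [Hc [Hlen [_ [Hlt _]]]]].
  destruct (cvars c) as [|y ys] eqn:Ev; [simpl in Hlen; lia|].
  assert (Hp2 : subgraph_path n cs S [VCon a; VVar y]).
  { split; [|split].
    - constructor; [intros [E|[]]; discriminate|constructor; [intros []|constructor]].
    - split; [|exact I]. exists c. rewrite Ev. split; auto. left; auto.
    - constructor; [auto|constructor; [split; simpl; auto; apply Hlt; left; auto|constructor]]. }
  destruct (longest_path_exists n cs S _ Hp2) as [P [HP Hlen2]].
  destruct P as [|u [|v1 R]]; simpl in Hlen2; try lia.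
  destruct u as [x|b]; [|eapply longest_path_head_not_constraint; eauto].
  destruct (longest_path_var_head_cycle n cs S x v1 R Hnp HP) as [A [b [B [-> HC1]]]].
  set (P := VVar x :: v1 :: A ++ VCon b :: B) in HP.
  destruct (exists_last (l := P) ltac:(discriminate)) as [P0 [z EP]].
  assert (Hrev := longest_path_rev _ _ _ _ HP). rewrite EP, rev_unit in Hrev.
  destruct (rev P0) as [|v1' R'] eqn:ER.
  { apply (f_equal (@length _)) in EP, ER. rewrite length_rev in ER. unfold P in EP.
    rewrite !length_app in EP. simpl in *. lia. }
  destruct z as [x'|b']; [|eapply longest_path_head_not_constraint; eauto].
  destruct (longest_path_var_head_cycle n cs S x' v1' R' Hnp Hrev) as [A' [b' [B' [_ HC2]]]].
  assert (Hx'C1 := unicyclic_cycle_incl n cs _ _ Huni HC1 HC2 (VVar x') (or_introl eq_refl)).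
  assert (EC : P = (VVar x :: (v1 :: A) ++ [VCon b]) ++ B)
    by (unfold P; simpl; rewrite <- app_assoc; reflexivity).
  assert (HB : B = nil).
  { apply (NoDup_app_last_in (VVar x :: (v1 :: A) ++ [VCon b]) B P0 (VVar x')); auto;
      rewrite <- EC; [apply HP|exact EP]. }
  rewrite HB, app_nil_r in EC. rewrite EC, app_comm_cons in EP.
  apply app_inj_tail in EP as [_ E]. discriminate.
Qed.

Definition update (sg : nat -> Omega) (x : nat) (b : Omega) : nat -> Omega :=
  fun y => if Nat.eq_dec y x then b else sg y.

(* Since the constraint has a second variable whose value is fixed, the two choices at
   [x] cannot produce both [tau] and [-tau]. *)
Lemma nae_satisfiable_at (tau : list Omega) vars sg x : length tau = length vars ->
  2 <= length vars -> NoDup vars -> In x vars ->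
  exists b, (0 < psi tau (map (update sg x b) vars))%R.
Proof.
  intros Hl H2 Hnd Hx.
  apply NNPP. intros Hno.
  assert (Hb : forall b, map (update sg x b) vars = tau \/ map (update sg x b) vars = map negb tau).
  { intros b. apply NNPP. intros Hn. apply Hno. exists b. apply psi_pos; tauto. }
  destruct (In_nth vars x 0 Hx) as [p [Hp Ep]].
  set (q := if Nat.eq_dec p 0 then 1 else 0).
  assert (Hq : q < length vars) by (unfold q; destruct (Nat.eq_dec p 0); lia).
  assert (Hqx : nth q vars 0 <> x).
  { rewrite <- Ep. intros E. apply (NoDup_nth vars 0) in E; auto.
    unfold q in E. destruct (Nat.eq_dec p 0); lia. }
  assert (Hmap : forall b i, i < length vars ->
            nth i (map (update sg x b) vars) true = update sg x b (nth i vars 0)).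
  { intros b i Hi. rewrite (nth_indep _ true (update sg x b 0)) by (rewrite length_map; auto).
    apply map_nth. }
  assert (Hatp : forall b, nth p (map (update sg x b) vars) true = b).
  { intros b. rewrite Hmap, Ep by auto. unfold update. destruct (Nat.eq_dec x x); congruence. }
  assert (Hatq : forall b, nth q (map (update sg x b) vars) true = sg (nth q vars 0)).
  { intros b. rewrite Hmap by auto. unfold update. destruct (Nat.eq_dec _ x); congruence. }
  pose proof (Hatp true) as Pt. pose proof (Hatp false) as Pf.
  pose proof (Hatq true) as Qt. pose proof (Hatq false) as Qf.
  assert (Hneg : @nth Omega q (map negb tau) true = negb (nth q tau true))
    by (apply nth_map_negb; unfold Omega in *; lia).
  destruct (Hb true) as [T|T], (Hb false) as [F|F]; rewrite T in Pt, Qt; rewrite F in Pf, Qf;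
    rewrite ?Hneg in *; try congruence; destruct (nth q tau true); simpl in *; congruence.
Qed.

Lemma NoDup_remove_nat (S : list nat) a : NoDup S -> NoDup (remove Nat.eq_dec a S).
Proof.
  induction S as [|b S IH]; simpl; intros H; [constructor|].
  inversion H; subst. destruct (Nat.eq_dec a b); auto.
  constructor; auto. intros Hin. apply in_remove in Hin. tauto.
Qed.

(* Induction on [S]: some constraint of [S] has a private variable; satisfy the others
   first and then choose that variable. *)
Lemma satisfiable_subfamily k n cs : 3 <= k -> csp_wf k n cs -> unicyclic n cs ->
  forall S, NoDup S -> (forall a, In a S -> a < length cs) ->
  exists sg : nat -> Omega, forall a c, In a S -> nth_error cs a = Some c ->
    (0 < psi (ctau c) (map sg (cvars c)))%R.
Proof.
  intros Hk Hwf Huni S. induction S as [S IH] using (induction_ltof1 _ (@length nat)).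
  intros Hnd HS. destruct S as [|a0 S0]; [exists (fun _ => true); intros a c []|].
  destruct (classic (no_private_var cs (a0 :: S0))) as [Hnp|Hpriv].
  { exfalso. apply (no_private_var_false k n cs (a0 :: S0) a0); try apply HS; simpl; auto. }
  unfold no_private_var in Hpriv.
  apply not_all_ex_not in Hpriv as [a Hpriv]. apply not_all_ex_not in Hpriv as [c Hpriv].
  apply imply_to_and in Hpriv as [Ha Hpriv]. apply imply_to_and in Hpriv as [Hc Hpriv].
  apply not_all_ex_not in Hpriv as [x Hpriv]. apply imply_to_and in Hpriv as [Hx Hpriv].
  set (S' := remove Nat.eq_dec a (a0 :: S0)).
  destruct (IH S') as [sg Hsg].
  - unfold ltof, S'. apply remove_length_lt; auto.
  - apply NoDup_remove_nat; auto.
  - intros b Hb. apply in_remove in Hb. apply HS; tauto.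
  - destruct (Hwf c (nth_error_In _ _ Hc)) as [Hl1 [Hl2 [Hnd2 _]]].
    destruct (nae_satisfiable_at (ctau c) (cvars c) sg x) as [bx Hbx]; auto; try lia.
    exists (update sg x bx). intros b c' Hb Hc'.
    destruct (Nat.eq_dec b a) as [->|Hba].
    + rewrite Hc in Hc'. injection Hc' as <-. auto.
    + assert (Hx' : ~ In x (cvars c')) by (intros Hin; apply Hpriv; exists b, c'; auto).
      rewrite (map_ext_in (update sg x bx) sg).
      * apply (Hsg b c'); auto. apply in_in_remove; auto.
      * intros y Hy. unfold update. destruct (Nat.eq_dec y x); congruence.
Qed.

Lemma UNI_holds k : 3 <= k -> UNI k.
Proof.
  intros Hk n cs Hwf Huni.
  destruct (satisfiable_subfamily k n cs Hk Hwf Huni (seq 0 (length cs))) as [sg Hsg].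
  - apply seq_NoDup.
  - intros a Ha. apply in_seq in Ha. lia.
  - exists sg. apply prodR_pos. intros c Hc.
    destruct (In_nth_error cs c Hc) as [a Ha].
    apply (Hsg a c); auto. apply in_seq. split; [lia|]. apply nth_error_Some. congruence.
Qed.

Theorem mainTheorem13 : forall k : nat, (3 <= k)%nat ->
  SYM k /\ BAL k /\ MIN k /\ POS k /\ UNI k.
Proof.
  intros k Hk. destruct k as [|k']; [lia|].
  split; [apply SYM_holds; lia|].
  split; [apply BAL_holds; lia|].
  split; [apply MIN_holds; lia|].
  split; [apply POS_holds|apply UNI_holds; lia].
Qed.
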